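(* Let $k\ge 2$ and let $p_1,\dots,p_k\ge 2$ be integers. If $W=C_{p_k}\wr C_{p_{k-1}}\wr\cdots\wr C_{p_1}$, then $cw(W)=1$.
   Context: $C_p$ denotes the cyclic group of order $p$ acting on $\{1,\dots,p\}$ by the shift $(1,2,\dots,p)$; $\wr$ denotes the permutational wreath product ($H\wr G=H^X\rtimes G$ for $G$ acting on $X$), which is associative. The commutator width $cw(G)$ is the maximum, over elements $g$ of the derived subgroup $G'$, of the least number of commutators whose product is $g$. *)

From mathcomp Require Import all_boot all_fingroup.
Set Implicit Arguments. Unset Strict Implicit. Unset Printing Implicit Defensive.
Local Open Scope group_scope.

(* Leaves of the rooted tree with branching p 0, p 1, ..., p (k-1):
   level i (i < k) has alphabet Z/(p i).  Level 0 is the root level,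
   carrying the top group C_{p_1} (so p i here is p_{i+1} of the paper). *)
Definition leaf (k : nat) (p : nat -> nat) : finType :=
  {dffun forall i : 'I_k, 'I_(p i)}.

(* The permutational iterated wreath product
   C_{p k-1} wr ... wr C_{p 0}, realized (as usual) as the group of
   permutations s of the leaves such that on coordinate i, s adds
   (mod p i) a shift depending only on the prefix x_0 .. x_{i-1}:
   (s x)_i = x_i + a_i(x_0,...,x_{i-1})  (mod p i). *)
Definition wreath_set (k : nat) (p : nat -> nat) : {set {perm leaf k p}} :=
  [set s : {perm leaf k p} | [forall x : leaf k p, [forall y : leaf k p,
     [forall i : 'I_k,
       [forall j : 'I_k, (j < i)%N ==> (x j == y j)] ==>
       (s x i + y i == s y i + x i %[mod p i])%N]]]].

Definition iterated_wreath (k : nat) (p : nat -> nat) : {group {perm leaf k p}} :=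
  <<wreath_set k p>>%G.

Definition prod_of_comms (gT : finGroupType) (G : {set gT}) (m : nat) (g : gT)
  : Prop :=
  exists s : seq (gT * gT),
    [/\ size s = m, all (fun xy => (xy.1 \in G) && (xy.2 \in G)) s &
        g = \prod_(xy <- s) [~ xy.1, xy.2]].

Definition commutator_width (gT : finGroupType) (G : {set gT}) (n : nat)
  : Prop :=
  (forall g, g \in [~: G, G] -> exists2 m, (m <= n)%N & prod_of_comms G m g) /\
  (exists2 g, g \in [~: G, G] &
     forall m, (m < n)%N -> ~ prod_of_comms G m g).

From mathcomp Require Import all_boot all_fingroup.
From mathcomp Require Import zify.
Set Implicit Arguments. Unset Strict Implicit. Unset Printing Implicit Defensive.
Local Open Scope group_scope.

(* Let [L] be the set of leaves and [t] the odometer (adding machine), which acts on [L] as a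
   single [|L|]-cycle.  A permutation commuting with a full cycle is determined by the image of one
   point, so [|C_W(t)| <= |L|], and the commutators [[x, t]], which are in bijection with the
   conjugates of [t], number [|W : C_W(t)| >= |W| / |L|].  On the other hand the level sums of
   the labels map [W] onto the product of the [Z/(p i)], of order [|L|], with abelian image, so
   [|W'| <= |W| / |L|].  Hence every element of [W'] is a commutator [[x, t]].  Two non-commuting
   elements acting only at the roots of levels 0 and 1 show [W' <> 1]. *)

Section CommutatorsWithFixedElement.
Variable gT : finGroupType.
Implicit Types G H N : {group gT}.

Lemma card_commg_imset G (t : gT) : #|[set [~ x, t] | x in G]| = #|G : 'C_G[t]|.
Proof.
have -> : [set [~ x, t] | x in G] = (fun u => u * t) @: (t^-1 ^: G).
  by rewrite -imset_comp; apply: eq_imset => x; rewrite /= commgEr.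
by rewrite card_imset; [rewrite classVg card_invg index_cent1 | apply: mulIg].
Qed.

Lemma card_le_indexg (T : finType) (r : T -> gT) G H :
    H \subset G -> (forall a, r a \in G) ->
    (forall a b, r a * (r b)^-1 \in H -> a = b) ->
  #|T| <= #|G : H|.
Proof.
move=> sHG rG r_inj; rewrite -cardsT -(card_in_imset (f := fun a => H :* r a)).
  rewrite [X in _ <= X]/indexg; apply/subset_leq_card/subsetP => _ /imsetP[a _ ->].
  by rewrite mem_rcosets (mulSGid sHG).
by move=> a b _ _ /rcoset_eqP; rewrite mem_rcoset; apply: r_inj.
Qed.

Lemma der_commg_fixed G N (t : gT) :
    t \in G -> [~: G, G] \subset N -> N \subset G -> #|'C_G[t]| <= #|G : N| ->
  forall g, g \in [~: G, G] -> exists2 x, x \in G & g = [~ x, t].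
Proof.
move=> Gt sG'N sNG leCN.
have sCG : 'C_G[t] \subset G := subsetIl G _.
have leG'C : #|[~: G, G]| <= #|G : 'C_G[t]|.
  apply: leq_trans (subset_leq_card sG'N) _.
  rewrite -(leq_pmul2l (cardG_gt0 'C_G[t])) (Lagrange sCG) -(Lagrange sNG) mulnC.
  by rewrite leq_mul2l leCN orbT.
have sIG' : [set [~ x, t] | x in G] \subset [~: G, G].
  by apply/subsetP => _ /imsetP[x Gx ->]; apply: mem_commg.
have -> : [~: G, G] = [set [~ x, t] | x in G].
  by apply/esym/eqP; rewrite eqEcard sIG' card_commg_imset.
by move=> _ /imsetP[x Gx ->]; exists x.
Qed.

Lemma commutator_width1 G :
    (forall g, g \in [~: G, G] -> exists2 x, x \in G & exists2 y, y \in G & g = [~ x, y]) ->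
    [~: G, G] != 1 ->
  commutator_width G 1.
Proof.
move=> G'comm /trivgPn[g G'g ntg]; split.
  move=> h /G'comm[x Gx [y Gy ->]]; exists 1%N => //.
  by exists [:: (x, y)]; rewrite /= Gx Gy big_seq1.
exists g => // m; rewrite ltnS leqn0 => /eqP -> [s [/size0nil -> _]].
by rewrite big_nil; apply/eqP.
Qed.

End CommutatorsWithFixedElement.

Lemma card_cent1_perm_le (T : finType) (t : {perm T}) (x0 : T) :
  (forall y, exists n, (t ^+ n) x0 = y) -> #|'C[t]| <= #|T|.
Proof.
move=> t_trans; rewrite -(card_in_imset (f := fun c : {perm T} => c x0)).
  by rewrite -cardsT subset_leq_card ?subsetT.
move=> c d /cent1P ct /cent1P dt cd; apply/permP => y.
have [n <-] := t_trans y.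
by rewrite -!permM -(commuteX n ct) -(commuteX n dt) !permM cd.
Qed.

Lemma ord_gt0 n (a : 'I_n) : 0 < n.
Proof. exact: leq_ltn_trans (leq0n a) (ltn_ord a). Qed.

Section IteratedWreath.
Variables (k : nat) (p : nat -> nat).
Local Notation L := (leaf k p).
Local Notation W := (wreath_set k p).

Definition prefix_eq (i : nat) (x y : L) := forall j : 'I_k, j < i -> x j = y j.

Lemma prefix_eq_sym i x y : prefix_eq i x y -> prefix_eq i y x.
Proof. by move=> xy j /xy. Qed.

Lemma wreathP (s : {perm L}) :
  reflect (forall x y (i : 'I_k), prefix_eq i x y -> s x i + y i = s y i + x i %[mod p i])
          (s \in W).
Proof.
rewrite inE; apply: (iffP forallP) => [sW x y i xy | sW x].
  move/forallP: (sW x) => /(_ y) /forallP /(_ i) /implyP xy_sxy; apply/eqP/xy_sxy.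
  by apply/forallP => j; apply/implyP => lt_ji; rewrite xy.
apply/forallP => y; apply/forallP => i; apply/implyP => /forallP xy.
by apply/eqP/sW => j lt_ji; apply/eqP/(implyP (xy j)).
Qed.

Lemma wreath_prefix_eq s x y i : s \in W -> prefix_eq i x y -> prefix_eq i (s x) (s y).
Proof.
move=> /wreathP sW xy j lt_ji; apply: val_inj.
have := sW x y j (fun j' lt_j'j => xy j' (ltn_trans lt_j'j lt_ji)).
by rewrite (xy j lt_ji) => /eqP; rewrite eqn_modDr !modn_small // => /eqP.
Qed.

Lemma group_set_wreath : group_set W.
Proof.
apply/andP; split; first by apply/wreathP => x y i _; rewrite !perm1 addnC.
apply/subsetP => _ /mulsgP[s t sW tW ->]; apply/wreathP => x y i xy; rewrite !permM.
have t_sxy := (wreathP _ tW) (s x) (s y) i (wreath_prefix_eq sW xy).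
have s_xy := (wreathP _ sW) x y i xy.
apply/eqP; rewrite -(eqn_modDr (s x i + s y i)).
have -> : t (s x) i + y i + (s x i + s y i) = (t (s x) i + s y i) + (s x i + y i) by lia.
have -> : t (s y) i + x i + (s x i + s y i) = (t (s y) i + s x i) + (s y i + x i) by lia.
by rewrite -modnDm t_sxy s_xy modnDm.
Qed.

Canonical wreath_group := Group group_set_wreath.

(* The label [(s x)_i - x_i] of [s] at the vertex above [x], written so as to avoid truncated
   subtraction. *)
Definition shift (s : {perm L}) (i : 'I_k) (x : L) : nat := (s x i + (p i - x i)) %% p i.

Lemma shift_prefix_eq s x y (i : 'I_k) :
  s \in W -> prefix_eq i x y -> shift s i x = shift s i y.
Proof.
move=> /wreathP sW xy; have := sW x y i xy.
have := ltn_ord (x i); have := ltn_ord (y i) => lt_y lt_x.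
rewrite /shift => /eqP e; apply/eqP; rewrite -(eqn_modDr (x i + y i)).
have -> : s x i + (p i - x i) + (x i + y i) = (s x i + y i) + p i by lia.
have -> : s y i + (p i - y i) + (x i + y i) = (s y i + x i) + p i by lia.
by rewrite eqn_modDr e.
Qed.

Lemma shiftM s t (i : 'I_k) x : shift (s * t) i x = (shift t i (s x) + shift s i x) %% p i.
Proof.
rewrite /shift permM modnDm.
have := ltn_ord (x i); have := ltn_ord (s x i) => lt_sx lt_x.
have -> : t (s x) i + (p i - s x i) + (s x i + (p i - x i)) =
          t (s x) i + (p i - x i) + p i by lia.
by rewrite modnDr.
Qed.

Lemma shift1 (i : 'I_k) x : shift 1 i x = 0.
Proof. by rewrite /shift perm1 subnKC ?modnn // ltnW. Qed.

Section PermOfShift.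
Variable f : 'I_k -> L -> nat.
Hypothesis f_prefix_eq : forall (i : 'I_k) x y, prefix_eq i x y -> f i x = f i y.

Fact shifted_coord_subproof (x : L) (i : 'I_k) : (x i + f i x) %% p i < p i.
Proof. exact/ltn_pmod/ord_gt0/(x i). Qed.

Definition shifted (x : L) : L := [ffun i => Ordinal (shifted_coord_subproof x i)].

Lemma shifted_inj : injective shifted.
Proof.
move=> x y /ffunP eq_xy.
suff xy i : prefix_eq i x y by apply/ffunP => j; apply: xy k j (ltn_ord j).
elim: i => [|i IHi] j //; rewrite ltnS leq_eqVlt => /orP[/eqP def_j | ]; last exact: IHi.
have xy : prefix_eq j x y by rewrite def_j.
apply: val_inj; have /(congr1 val) := eq_xy j; rewrite /= !ffunE /= (f_prefix_eq xy).
by move/eqP; rewrite eqn_modDr !modn_small // => /eqP.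
Qed.

Definition perm_of_shift := perm shifted_inj.

Lemma perm_of_shiftE x i : perm_of_shift x i = (x i + f i x) %% p i :> nat.
Proof. by rewrite permE ffunE. Qed.

Lemma perm_of_shift_in : perm_of_shift \in W.
Proof.
apply/wreathP => x y i xy; rewrite !perm_of_shiftE !modnDml (f_prefix_eq xy).
by rewrite addnAC [in RHS]addnAC [y i + x i]addnC.
Qed.

Lemma shift_perm_of_shift i x : shift perm_of_shift i x = f i x %% p i.
Proof.
rewrite /shift perm_of_shiftE modnDml; have := ltn_ord (x i) => lt_x.
have -> : x i + f i x + (p i - x i) = f i x + p i by lia.
by rewrite modnDr.
Qed.

End PermOfShift.

Definition zero_prefix (i : 'I_k) (x : L) := [forall j : 'I_k, (j < i) ==> (x j == 0 :> nat)].

(* One leaf below each vertex of level [i]: the leaves whose labels vanish from level [i] on. *)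
Definition level_reps (i : 'I_k) :=
  [set x : L | [forall j : 'I_k, (i <= j) ==> (x j == 0 :> nat)]].

(* The sum of the labels of [s] at level [i]; these are the coordinates of the abelianisation
   map of [W] onto the product of the [Z/(p i)]. *)
Definition level_sum (s : {perm L}) (i : 'I_k) :=
  (\sum_(x in level_reps i) shift s i x) %% p i.

Definition zero_tail (i : 'I_k) (x : L) : L :=
  [ffun j : 'I_k => if j < i then x j else Ordinal (ord_gt0 (x j))].

Lemma zero_tail_prefix_eq (i : 'I_k) (x : L) : prefix_eq i (zero_tail i x) x.
Proof. by move=> j lt_ji; rewrite ffunE lt_ji. Qed.

Lemma zero_tail_level_reps (i : 'I_k) (x : L) : zero_tail i x \in level_reps i.
Proof.
by rewrite inE; apply/forallP => j; apply/implyP => le_ij; rewrite ffunE ltnNge le_ij.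
Qed.

Lemma level_reps_prefix_eq i x y :
  x \in level_reps i -> y \in level_reps i -> prefix_eq i x y -> x = y.
Proof.
rewrite !inE => /forallP x0 /forallP y0 xy; apply/ffunP => j.
have [/xy // | le_ij] := ltnP j i; apply: ord_inj.
by move: (implyP (x0 j) le_ij) (implyP (y0 j) le_ij) => /eqP -> /eqP ->.
Qed.

Lemma sum_shift_perm s t i : s \in W -> t \in W ->
  \sum_(x in level_reps i) shift t i (s x) = \sum_(x in level_reps i) shift t i x.
Proof.
(* [s] permutes the vertices of level [i]; [rep] is that permutation read on representatives. *)
move=> sW tW; pose rep x := zero_tail i (s x).
have rep_inj : {in level_reps i &, injective rep}.
  move=> x y x0 y0 eq_rep; apply: (@level_reps_prefix_eq i) => //.
  have sxy : prefix_eq i (s x) (s y).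
    by move=> j lt_ji; have := congr1 (fun z : L => z j) eq_rep; rewrite !ffunE lt_ji.
  by have := wreath_prefix_eq (groupVr sW) sxy; rewrite !permK.
have rep_onto : rep @: level_reps i = level_reps i.
  apply/eqP; rewrite eqEcard card_in_imset // leqnn andbT.
  by apply/subsetP => _ /imsetP[x _ ->]; apply: zero_tail_level_reps.
rewrite -[in RHS]rep_onto big_imset //=; apply: eq_bigr => x _.
by apply/shift_prefix_eq/prefix_eq_sym/zero_tail_prefix_eq.
Qed.

Lemma level_sumM s t i : s \in W -> t \in W ->
  level_sum (s * t) i = (level_sum s i + level_sum t i) %% p i.
Proof.
move=> sW tW; rewrite /level_sum modnDm.
under eq_bigr do rewrite shiftM.
by rewrite modn_summ big_split /= sum_shift_perm // addnC.
Qed.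

Lemma level_sum1 i : level_sum 1 i = 0.
Proof. by rewrite /level_sum big1 ?mod0n // => x _; apply: shift1. Qed.

Definition level_sum_ker := [set s in W | [forall i, level_sum s i == 0]].

Lemma level_sum_kerP s :
  reflect (s \in W /\ forall i, level_sum s i = 0) (s \in level_sum_ker).
Proof.
rewrite [s \in level_sum_ker]inE; apply: (iffP andP) => [[sW /forallP s0] | [sW s0]].
  by split=> // i; apply/eqP.
by split=> //; apply/forallP => i; apply/eqP.
Qed.

Lemma group_set_level_sum_ker : group_set level_sum_ker.
Proof.
apply/andP; split; first by apply/level_sum_kerP; split=> [|i]; rewrite ?group1 ?level_sum1.
apply/subsetP => _ /mulsgP[s t /level_sum_kerP[sW s0] /level_sum_kerP[tW t0] ->].
apply/level_sum_kerP; split=> [|i]; first exact: groupM.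
by rewrite level_sumM // s0 t0 mod0n.
Qed.

Canonical level_sum_ker_group := Group group_set_level_sum_ker.

Lemma level_sum_ker_sub : level_sum_ker \subset W.
Proof. by apply/subsetP => s /level_sum_kerP[]. Qed.

Lemma level_sumV s i : s \in W -> (level_sum s^-1 i + level_sum s i) %% p i = 0.
Proof. by move=> sW; rewrite -level_sumM ?groupV // mulVg level_sum1. Qed.

Lemma der_wreath_sub_ker : [~: W, W] \subset level_sum_ker.
Proof.
rewrite gen_subG; apply/subsetP => _ /imset2P[x y xW yW ->].
apply/level_sum_kerP; split=> [|i]; first by rewrite groupR.
have -> : [~ x, y] = (y * x)^-1 * (x * y) by rewrite invMg /commg /conjg !mulgA.
have comm_xy : level_sum (x * y) i = level_sum (y * x) i by rewrite !level_sumM // addnC.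
by rewrite level_sumM ?groupV ?groupM // comm_xy level_sumV ?groupM.
Qed.

Lemma level_sum_ker_eq s t i : s \in W -> t \in W -> s * t^-1 \in level_sum_ker ->
  level_sum s i = level_sum t i.
Proof.
move=> sW tW /level_sum_kerP[stW st0].
by rewrite -(mulgKV t s) level_sumM // st0 add0n modn_mod.
Qed.

Definition root_shift (c : 'I_k -> nat) (i : 'I_k) (x : L) :=
  if zero_prefix i x then c i else 0.

Lemma root_shift_prefix_eq c (i : 'I_k) x y :
  prefix_eq i x y -> root_shift c i x = root_shift c i y.
Proof.
move=> xy; rewrite /root_shift /zero_prefix; congr (if _ then _ else _).
by apply: eq_forallb => j; case: ltnP => // /xy ->.
Qed.

Definition root_perm c := perm_of_shift (@root_shift_prefix_eq c).

Lemma root_permE c x i : root_perm c x i = (x i + root_shift c i x) %% p i :> nat.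
Proof. exact: perm_of_shiftE. Qed.

Lemma root_perm_in c : root_perm c \in W.
Proof. exact: perm_of_shift_in. Qed.

Hypothesis p_gt0 : forall i, i < k -> 0 < p i.

Definition leaf0 : L := [ffun i : 'I_k => Ordinal (p_gt0 (ltn_ord i))].

Lemma leaf0E i : leaf0 i = 0 :> nat.
Proof. by rewrite ffunE. Qed.

Lemma zero_prefix_leaf0 i : zero_prefix i leaf0.
Proof. by apply/forallP => j; rewrite leaf0E implybT. Qed.

Lemma level_sum_root_perm c i : level_sum (root_perm c) i = c i %% p i.
Proof.
have leaf0_rep : leaf0 \in level_reps i.
  by rewrite inE; apply/forallP => j; rewrite leaf0E implybT.
rewrite /level_sum (bigD1 leaf0) //= big1 => [|x /andP[x_rep ne_x0]].
  by rewrite addn0 shift_perm_of_shift /root_shift zero_prefix_leaf0 modn_mod.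
rewrite shift_perm_of_shift /root_shift; case: ifP => [/forallP x0 | _]; last exact: mod0n.
case/eqP: ne_x0; apply: (@level_reps_prefix_eq i) => // j lt_ji.
by apply: ord_inj; rewrite leaf0E; apply/eqP/(implyP (x0 j)).
Qed.

Lemma card_leaf_le_index : #|L| <= #|W : level_sum_ker|.
Proof.
apply: (@card_le_indexg _ _ (fun a : L => root_perm (fun i => a i)) wreath_group).
- exact: level_sum_ker_sub.
- by move=> a; apply: root_perm_in.
move=> a b ab0; apply/ffunP => i; apply: ord_inj.
have := level_sum_ker_eq i (root_perm_in _) (root_perm_in _) ab0.
by rewrite !level_sum_root_perm !modn_small.
Qed.

Definition radix (i : nat) := (\prod_(j < i) p j)%N.

Definition radix_val (i : nat) (x : L) := (\sum_(j < k | j < i) x j * radix j)%N.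

Lemma radixS i : radix i.+1 = (radix i * p i)%N.
Proof. by rewrite /radix big_ord_recr. Qed.

Lemma radix_gt0 i : i <= k -> 0 < radix i.
Proof.
elim: i => [|i IHi] le_ik; first by rewrite /radix big_ord0.
by rewrite radixS muln_gt0 IHi ?p_gt0 // ltnW.
Qed.

Lemma radix_val0 x : radix_val 0 x = 0.
Proof. by rewrite /radix_val big_pred0. Qed.

Lemma radix_valS i x (lt_ik : i < k) :
  radix_val i.+1 x = (radix_val i x + x (Ordinal lt_ik) * radix i)%N.
Proof.
rewrite /radix_val (bigD1 (Ordinal lt_ik)) //= addnC; congr (_ + _).
by apply: eq_bigl => j; rewrite ltnS ltn_neqAle andbC.
Qed.

Lemma radix_val_lt i x : i <= k -> radix_val i x < radix i.
Proof.
elim: i => [|i IHi] le_ik; first by rewrite radix_val0 /radix big_ord0.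
rewrite radix_valS radixS; have := IHi (ltnW le_ik).
have := ltn_ord (x (Ordinal le_ik)) => /= lt_xi lt_val.
have : ((x (Ordinal le_ik)).+1 * radix i <= p i * radix i)%N by rewrite leq_mul2r lt_xi orbT.
by rewrite mulnC; nia.
Qed.

Lemma radix_val_prefix_eq i x y : prefix_eq i x y -> radix_val i x = radix_val i y.
Proof. by move=> xy; apply: eq_bigr => j /xy ->. Qed.

Lemma radix_val_inj : injective (radix_val k).
Proof.
move=> x y eq_xy; apply/ffunP => j.
suff xy i : i <= k -> radix_val i x = radix_val i y -> prefix_eq i x y.
  exact: xy k (leqnn k) eq_xy j (ltn_ord j).
elim: i => [|i IHi] le_ik; first by [].
rewrite !radix_valS => eq_val j' /[!ltnS] le_j'i.
have rad_gt0 := radix_gt0 (ltnW le_ik).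
have [lt_x lt_y] := (radix_val_lt x (ltnW le_ik), radix_val_lt y (ltnW le_ik)).
have eq_i : x (Ordinal le_ik) = y (Ordinal le_ik) :> nat.
  have := congr1 (divn^~ (radix i)) eq_val.
  by rewrite ![radix_val i _ + _]addnC !divnMDl // !divn_small // !addn0.
have eq_lt_i : radix_val i x = radix_val i y.
  have := congr1 (modn^~ (radix i)) eq_val.
  by rewrite ![radix_val i _ + _]addnC !modnMDl !modn_small.
move: le_j'i; rewrite leq_eqVlt => /orP[/eqP def_j' | ].
  have -> : j' = Ordinal le_ik by apply: val_inj.
  exact: ord_inj eq_i.
exact: IHi (ltnW le_ik) eq_lt_i j'.
Qed.

(* The odometer adds one to the mixed-radix number [radix_val k x], least significant digit at
   level 0: digit [i] moves iff all lower digits are maximal. *)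
Definition carry (i : 'I_k) (x : L) : nat := (radix_val i x).+1 == radix i.

Lemma carry_prefix_eq (i : 'I_k) x y : prefix_eq i x y -> carry i x = carry i y.
Proof. by move=> xy; rewrite /carry (radix_val_prefix_eq xy). Qed.

Definition odometer := perm_of_shift carry_prefix_eq.

Lemma odometer_in : odometer \in W.
Proof. exact: perm_of_shift_in. Qed.

Lemma radix_val_odometer i x :
  i <= k -> radix_val i (odometer x) = (radix_val i x).+1 %% radix i.
Proof.
elim: i => [|i IHi] le_ik; first by rewrite !radix_val0 /radix big_ord0 modn1.
rewrite !radix_valS (IHi (ltnW le_ik)) perm_of_shiftE radixS /carry /=.
have := radix_val_lt x (ltnW le_ik); have := ltn_ord (x (Ordinal le_ik)).
have := radix_gt0 (ltnW le_ik).
move: (radix_val i x) (x (Ordinal le_ik) : nat) (radix i) => v a r r_gt0 lt_a lt_v.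
case: eqP => [def_r | ne_r] /=.
  have -> : (v + a * r).+1 = ((a + 1) * r)%N by rewrite -def_r; nia.
  by rewrite def_r modnn add0n muln_modl [(r * p i)%N]mulnC.
have lt_v1 : v.+1 < r by rewrite ltn_neqAle lt_v andbT; apply/eqP.
rewrite addn0 !modn_small //.
have : (a.+1 * r <= p i * r)%N by rewrite leq_mul2r lt_a orbT.
by rewrite mulnC; nia.
Qed.

Lemma odometer_transitive x0 y : exists n, (odometer ^+ n) x0 = y.
Proof.
have val_odoX n x : radix_val k ((odometer ^+ n) x) = (radix_val k x + n) %% radix k.
  elim: n => [|n IHn]; first by rewrite expg0 perm1 addn0 modn_small // radix_val_lt.
  by rewrite expgSr permM radix_val_odometer // IHn -addn1 modnDml addn1 addnS.
exists (radix_val k y + (radix k - radix_val k x0)); apply: radix_val_inj.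
have := radix_val_lt x0 (leqnn k); have := radix_val_lt y (leqnn k) => lt_y lt_x0.
rewrite val_odoX addnCA subnKC ?(ltnW lt_x0) //.
by rewrite -modnDmr modnn addn0 modn_small.
Qed.

Lemma der_wreath_commg_odometer g :
  g \in [~: W, W] -> exists2 x, x \in W & g = [~ x, odometer].
Proof.
apply: (@der_commg_fixed _ wreath_group level_sum_ker_group).
- exact: odometer_in.
- exact: der_wreath_sub_ker.
- exact: level_sum_ker_sub.
apply: leq_trans card_leaf_le_index.
apply: leq_trans (subset_leq_card (subsetIr _ _)) _.
exact: card_cent1_perm_le (odometer_transitive leaf0).
Qed.

Lemma der_wreath_neq1 : 1 < k -> 1 < p 0 -> 1 < p 1 -> [~: W, W] != 1.
Proof.
move=> lt_1k lt_1p0 lt_1p1; pose i0 := Ordinal (ltnW lt_1k); pose i1 := Ordinal lt_1k.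
pose x := root_perm (fun i => (i == 0 :> nat) : nat).
pose y := root_perm (fun i => (i == 1%N :> nat) : nat).
have x_leaf0 : x leaf0 i0 = 1%N :> nat.
  by rewrite root_permE leaf0E /root_shift zero_prefix_leaf0 modn_small.
have xy_leaf0 : (x * y) leaf0 i1 = 0 :> nat.
  rewrite permM !root_permE leaf0E /root_shift zero_prefix_leaf0 /= mod0n add0n.
  suff -> : zero_prefix i1 (x leaf0) = false by rewrite mod0n.
  by apply/negP => /forallP /(_ i0); rewrite /= x_leaf0.
have yx_leaf0 : (y * x) leaf0 i1 = 1%N :> nat.
  rewrite permM !root_permE leaf0E /root_shift zero_prefix_leaf0 /= add0n.
  by case: (zero_prefix _ _); rewrite /= !addn0 !modn_small.
apply/(@trivgPn _ [~: wreath_group, wreath_group]%G); exists [~ x, y].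
  by rewrite mem_commg ?root_perm_in.
by apply/negP => /commgP xy; move: xy_leaf0; rewrite xy yx_leaf0.
Qed.

End IteratedWreath.

Theorem mainTheorem6 (k : nat) (p : nat -> nat) :
  (2 <= k)%N -> (forall i, (i < k)%N -> (2 <= p i)%N) ->
  commutator_width (iterated_wreath k p) 1.
Proof.
move=> k_ge2 p_ge2.
have p_gt0 i : i < k -> 0 < p i by move/p_ge2/ltnW.
rewrite /iterated_wreath /= (gen_set_id (group_set_wreath k p)).
apply: (@commutator_width1 _ (wreath_group k p)).
  move=> g /(der_wreath_commg_odometer p_gt0)[x Wx ->].
  by exists x => //; exists (odometer k p); rewrite ?odometer_in.
by apply: der_wreath_neq1; rewrite ?p_ge2 // (leq_trans _ k_ge2).
Qed.
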